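(* Let $(\omega,c)\in\mathbb{R}^2$ satisfy: $\omega>c^2/4$, or $\omega=c^2/4$ and $c>0$. Then the function $(\alpha_0,\alpha_1)\ni\eta_3\mapsto\eta_2\in(0,\alpha_0)$, where $\eta_2=\frac{-\eta_3+4c+\sqrt{A(\eta_3)}}{2}$, is strictly decreasing.
   Context: $\alpha_0=\tfrac13(4c+\sqrt{48\omega+4c^2})$, $\alpha_1=4\sqrt\omega+2c$, $A(x)=-3x^2+8cx+64\omega$ (positive on $(\alpha_0,\alpha_1)$). For fixed $\eta_3$, $\eta_2$ is the value satisfying $\eta_2^2+\eta_3^2+\eta_2\eta_3-4c(\eta_2+\eta_3)-16(\omega-c^2/4)=0$ given by the formula above. *)

From Stdlib Require Import Reals.
Open Scope R_scope.

Definition alpha0 (omega c : R) : R := (4 * c + sqrt (48 * omega + 4 * c ^ 2)) / 3.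

Definition alpha1 (omega c : R) : R := 4 * sqrt omega + 2 * c.

Definition Apoly (omega c x : R) : R := - 3 * x ^ 2 + 8 * c * x + 64 * omega.

Definition eta2 (omega c eta3 : R) : R :=
  (- eta3 + 4 * c + sqrt (Apoly omega c eta3)) / 2.

(* A is a downward parabola with vertex at 4c/3 <= alpha0, so for eta3 > alpha0
   both -eta3 and sqrt (A eta3) decrease as eta3 grows; hence so does eta2.
   The hypothesis on (omega, c) and the bound eta3 < alpha1 only serve to put
   eta2 in (0, alpha0), which monotonicity does not need. *)

From Stdlib Require Import Reals Lra Psatz.
Open Scope R_scope.

Lemma alpha0_ge_vertex (omega c : R) : 4 * c / 3 <= alpha0 omega c.
Proof.
  unfold alpha0.
  pose proof (sqrt_pos (48 * omega + 4 * c ^ 2)).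
  lra.
Qed.

(* A x - A y = (y - x) (3 (x + y) - 8 c). *)
Lemma Apoly_decreasing (omega c x y : R) :
  4 * c / 3 <= x -> x <= y -> Apoly omega c y <= Apoly omega c x.
Proof.
  intros Hx Hxy.
  unfold Apoly.
  nra.
Qed.

Lemma eta2_decreasing (omega c x y : R) :
  4 * c / 3 <= x -> x < y -> eta2 omega c y < eta2 omega c x.
Proof.
  intros Hx Hxy.
  assert (Hsqrt : sqrt (Apoly omega c y) <= sqrt (Apoly omega c x)).
  { apply sqrt_le_1_alt, Apoly_decreasing; lra. }
  unfold eta2.
  lra.
Qed.

Theorem lemma3p3 (omega c : R)
  (Hwc : omega > c ^ 2 / 4 \/ (omega = c ^ 2 / 4 /\ c > 0)) :
  forall x y : R,
    alpha0 omega c < x -> x < y -> y < alpha1 omega c ->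
    eta2 omega c y < eta2 omega c x.
Proof.
  intros x y Hx Hxy _.
  apply eta2_decreasing; [| exact Hxy].
  pose proof (alpha0_ge_vertex omega c).
  lra.
Qed.
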